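(* Let $F$ be a field of characteristic $0$ and let $f\in F[X]$ be monic of degree $n\geq 1$. Let $K$ be a splitting field of $f$ over $F$, let $S(f)$ be the set of roots of $f$ in $K$, and for $\alpha\in S(f)$ let $m(\alpha)$ be the multiplicity of $\alpha$ as a root of $f$. Let $M_f\in K[X]$ be the unique polynomial of degree less than $|S(f)|$ satisfying $M_f(\alpha)=m(\alpha)$ for all $\alpha\in S(f)$. Set $f_0=f/\gcd(f,f')$, $s=\deg(f_0)$ and $P=f'/\gcd(f,f')$. Then there exist unique $g\in F_s[X]$ and $h\in F[X]$ such that $f_0'g+f_0h=1$. Moreover, for these $P$, $f_0$ and $g$, $$[M_f]=P(C_{f_0})\,[g].$$
   Context: Here $\gcd$ denotes the monic greatest common divisor and $f'$ the formal derivative. For a positive integer $s$, $F_s[X]$ denotes the subspace of $F[X]$ of polynomials of degree less than $s$, with basis $1,X,\dots,X^{s-1}$; for a polynomial $R$ of degree less than $s$ (with coefficients in $F$ or $K$), $[R]$ denotes the column vector of its coordinates $(r_0,\dots,r_{s-1})^T$ relative to $1,X,\dots,X^{s-1}$, where $R=r_0+r_1X+\dots+r_{s-1}X^{s-1}$. For a monic polynomial $q=q_0+q_1X+\cdots+q_{s-1}X^{s-1}+X^s$ of positive degree $s$, its companion matrix $C_q\in M_s(F)$ is the $s\times s$ matrix with $1$'s on the subdiagonal (entries $(i+1,i)$ for $i=1,\dots,s-1$), last column $(-q_0,-q_1,\dots,-q_{s-1})^T$, and all other entries $0$. For a polynomial $R$ and square matrix $A$, $R(A)$ denotes evaluation of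 $R$ at $A$. *)

From HB Require Import structures.
From mathcomp Require Import all_boot all_order all_algebra all_field.
Set Implicit Arguments. Unset Strict Implicit. Unset Printing Implicit Defensive.
Import GRing.Theory.
Local Open Scope ring_scope.

(* monic greatest common divisor (gcdp is only defined up to a unit) *)
Definition mgcd {F : fieldType} (p q : {poly F}) : {poly F} :=
  (lead_coef (gcdp p q))^-1 *: gcdp p q.

(* companion matrix of q (of size deg q): 1's on the subdiagonal,
   entries (i+1,i), last column (-q_0, ..., -q_{s-1})^T, 0 elsewhere *)
Definition compan {R : nzRingType} (q : {poly R}) : 'M[R]_((size q).-1) :=
  \matrix_(i < (size q).-1, j < (size q).-1)
    ((i == j.+1 :> nat)%:R - (if (j == (size q).-2 :> nat) then q`_i else 0)).

Definition mxeval {R : comNzRingType} {n : nat} (A : 'M[R]_n) (p : {poly R}) : 'M[R]_n :=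
  \sum_(i < size p) p`_i *: A ^+ i.

Definition coordv {R : nzRingType} (s : nat) (p : {poly R}) : 'cV[R]_s :=
  \col_(i < s) p`_i.

From HB Require Import structures.
From mathcomp Require Import all_boot all_order all_algebra all_field.
From mathcomp Require Import ring.

Set Implicit Arguments.
Unset Strict Implicit.
Unset Printing Implicit Defensive.
Import GRing.Theory.
Local Open Scope ring_scope.

(* In characteristic 0,
   f' has multiplicity m(a) - 1 at every root, so gcd(f, f') has multiplicity
   m(a) - 1, f0 = prod_a (X - a) is squarefree and coprime to f0', and cancelling
   (X - a)^(m(a)+1) in (X - a) P f = (X - a) f' f0 gives P(a) = m(a) f0'(a).
   Since f0'(a) g(a) = 1 at the roots, P g mod f0 takes the value m(a) at each
   root and has degree < s = |S(f)|, hence equals M_f.  Finally C_f0 acts on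
   coordinate vectors as multiplication by X modulo f0, so that
   P(C_f0) [g] = [P g mod f0]. *)

Section CoordinateVectors.
Variables (R : nzRingType) (s : nat).

Lemma coordvZ (c : R) (p : {poly R}) : coordv s (c *: p) = c *: coordv s p.
Proof. by apply/matrixP => i j; rewrite !mxE coefZ. Qed.

Lemma coordv_sum (I : Type) (r : seq I) (P : pred I) (E : I -> {poly R}) :
  coordv s (\sum_(i <- r | P i) E i) = \sum_(i <- r | P i) coordv s (E i).
Proof.
by apply/matrixP => i j; rewrite summxE !mxE coef_sum; apply: eq_bigr => k _; rewrite mxE.
Qed.

Lemma map_coordv (S : nzRingType) (f : {additive R -> S}) (p : {poly R}) :
  map_mx f (coordv s p) = coordv s (map_poly f p).
Proof. by apply/matrixP => i j; rewrite !mxE coef_map. Qed.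

End CoordinateVectors.

Lemma modp_sum (F : fieldType) (q : {poly F}) (I : Type) (r : seq I) (P : pred I)
    (E : I -> {poly F}) :
  (\sum_(i <- r | P i) E i) %% q = \sum_(i <- r | P i) (E i %% q).
Proof. by apply: (big_morph (fun p => p %% q)); [exact: modpD | exact: mod0p]. Qed.

Section CompanionMatrix.
Variables (F : fieldType) (q : {poly F}).
Hypothesis monic_q : q \is monic.
Local Notation n := (size q).-1.

Lemma modp_mulX (r : {poly F}) :
  (size r <= n)%N -> ('X * r) %% q = 'X * r - r`_n.-1 *: q.
Proof.
move=> sr; symmetry; apply: (modpP (q := (r`_n.-1)%:P)); first by rewrite mul_polyC; ring.
have lq : q`_n = 1 by have /eqP := monic_q.
have sq : size q = n.+1 by rewrite prednK // size_poly_gt0 monic_neq0.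
rewrite sq ltnS; apply/leq_sizeP => -[|j]; rewrite coefB coefXM coefZ /=.
  by rewrite leqn0 => /eqP n0; rewrite nth_default ?mul0r ?subr0 // (leq_trans sr) // n0.
case: (ltngtP n j.+1) => // [lt_nj | e_nj] _.
  have rj : (size r <= j)%N by rewrite (leq_trans sr) // -ltnS.
  have qj : (size q <= j.+1)%N by rewrite sq.
  by rewrite (nth_default 0 rj) (nth_default 0 qj) mulr0 subr0.
have -> : (size q).-2 = j by rewrite -[(size q).-2]/(n.-1) e_nj.
by rewrite -e_nj lq mulr1 subrr.
Qed.

Lemma compan_mul_coordv (r : {poly F}) :
  (size r <= n)%N -> compan q *m coordv n r = coordv n (('X * r) %% q).
Proof.
(* Row i of C_q picks r_(i-1) from the subdiagonal and -q_i r_(n-1) from the last column. *)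
move=> sr; rewrite modp_mulX //; apply/matrixP => i j.
rewrite !mxE coefB coefXM coefZ mulrC.
under eq_bigr do rewrite !mxE mulrBl; rewrite sumrB; congr (_ - _).
  case: i => -[|i] lt_in /=; first by rewrite big1 // => k _; rewrite mul0r.
  rewrite (bigD1 (Ordinal (ltnW lt_in))) //= eqxx mul1r big1 ?addr0 // => k ne_ki.
  rewrite eqSS; case: eqP => [ik | _]; last by rewrite mul0r.
  by case/eqP: ne_ki; apply: val_inj; rewrite /= ik.
have lt_n : ((size q).-2 < n)%N by case: (n) i => -[].
rewrite (bigD1 (Ordinal lt_n)) //= eqxx big1 ?addr0 // => k ne_k.
by rewrite ifN ?mul0r //; apply: contra ne_k => /eqP k_eq; apply/eqP/val_inj.
Qed.

Lemma compan_exp_mul_coordv k (r : {poly F}) :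
  (size r <= n)%N -> compan q ^+ k *m coordv n r = coordv n (('X^k * r) %% q).
Proof.
have sq : (0 < size q)%N by rewrite size_poly_gt0 monic_neq0.
elim: k r => [|k IHk] r sr.
  by rewrite expr0 mul1mx mul1r modp_small // -(prednK sq) ltnS.
have sXr : (size (('X * r) %% q)%R <= n)%N.
  by rewrite -ltnS prednK // ltn_modp monic_neq0.
by rewrite exprSr -mulmxA compan_mul_coordv // IHk // modp_mul exprSr mulrA.
Qed.

Lemma mxeval_compan_mul_coordv (P r : {poly F}) :
  (size r <= n)%N -> mxeval (compan q) P *m coordv n r = coordv n ((P * r) %% q).
Proof.
move=> sr; rewrite /mxeval mulmx_suml.
under eq_bigr do rewrite -scalemxAl compan_exp_mul_coordv // -coordvZ -modpZl scalerAl.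
by rewrite -coordv_sum -modp_sum -mulr_suml -poly_def coefK.
Qed.

End CompanionMatrix.

Lemma XsubC_mul_deriv (R : comNzRingType) (p : {poly R}) (a : R) m :
  ('X - a%:P) * (p * ('X - a%:P) ^+ m)^`() =
  ('X - a%:P) ^+ m * (p *+ m + ('X - a%:P) * p^`()).
Proof.
rewrite derivM deriv_exp derivXsubC mul1r.
by case: m => [|m]; rewrite ?mulr0n ?expr0 /=; [ring | rewrite exprS; ring].
Qed.

Section MonicGcd.
Variable F : fieldType.
Implicit Types p q : {poly F}.

Lemma eqp_mgcd p q : mgcd p q %= gcdp p q.
Proof.
rewrite /mgcd; have [->|g0] := eqVneq (gcdp p q) 0; first by rewrite scaler0 eqpxx.
by rewrite eqp_scale // invr_eq0 lead_coef_eq0.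
Qed.

Lemma monic_mgcd p q : gcdp p q != 0 -> mgcd p q \is monic.
Proof. by move=> g0; rewrite monicE lead_coefZ mulVf // lead_coef_eq0. Qed.

Lemma mgcd_dvdl p q : mgcd p q %| p.
Proof. by rewrite (eqp_dvdl _ (eqp_mgcd p q)) dvdp_gcdl. Qed.

Lemma mgcd_dvdr p q : mgcd p q %| q.
Proof. by rewrite (eqp_dvdl _ (eqp_mgcd p q)) dvdp_gcdr. Qed.

Lemma map_mgcd (R : fieldType) (iota : {rmorphism F -> R}) p q :
  map_poly iota (mgcd p q) = mgcd (map_poly iota p) (map_poly iota q).
Proof. by rewrite /mgcd map_polyZ fmorphV -gcdp_map lead_coef_map. Qed.

End MonicGcd.

Lemma eqp_mup (K : fieldType) (p q : {poly K}) a : p %= q -> mup a p = mup a q.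
Proof.
move=> e_pq; have [p0|p0] := eqVneq p 0.
  by move: e_pq; rewrite p0 eqp_sym eqp0 => /eqP->.
have q0 : q != 0 by apply: contraNneq p0 => q0; move: e_pq; rewrite q0 eqp0 => /eqP->.
have le_mup n : (n <= mup a p)%N = (n <= mup a q)%N by rewrite !mup_geq // (eqp_dvdr _ e_pq).
by apply/eqP; rewrite eqn_leq -le_mup leqnn le_mup leqnn.
Qed.

Lemma mup_gcdp (K : fieldType) (p q : {poly K}) a : p != 0 -> q != 0 ->
  mup a (gcdp p q) = minn (mup a p) (mup a q).
Proof.
move=> p0 q0; have g0 : gcdp p q != 0 by rewrite gcdp_eq0 (negPf p0).
apply/eqP; rewrite eqn_leq leq_min !mup_geq // -dvdp_gcd -mup_geq // leqnn /=.
by rewrite dvdp_gcd -!mup_geq // geq_minl geq_minr.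
Qed.

Section MultiplicityCharZero.
Variable K : fieldType.
Hypothesis charK : [pchar K] =i pred0.

Lemma natf_eq0 m : (m%:R == 0 :> K) = (m == 0)%N.
Proof. by move/pcharf0P: charK. Qed.

Lemma deriv_neq0 (p : {poly K}) : (1 < size p)%N -> p^`() != 0.
Proof.
case Ep: (size p) => [|[|n]] // _.
have lead_p : p`_n.+1 = lead_coef p by rewrite /lead_coef Ep.
have : p^`()`_n != 0.
  by rewrite coef_deriv -mulr_natr mulf_neq0 ?natf_eq0 // lead_p lead_coef_eq0 -size_poly_eq0 Ep.
by apply: contraNneq => ->; rewrite coef0.
Qed.

Lemma mup_deriv (p : {poly K}) a : p != 0 -> root p a ->
  mup a p^`() = (mup a p).-1.
Proof.
move=> p0 pa; case: (multiplicity_XsubC p a) => m [q]; rewrite p0 /= => qa ep.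
have mup_p : mup a p = m by rewrite ep mupMr // mup_XsubCX eqxx.
have m0 : (0 < m)%N by rewrite -mup_p -XsubC_dvd // dvdp_XsubCl.
have Ta : ~~ root (q *+ m + ('X - a%:P) * q^`()) a.
  by rewrite /root !hornerE subrr mul0r addr0 hornerMn -mulr_natr mulf_neq0 ?natf_eq0 -?lt0n.
have := congr1 (mup a) (XsubC_mul_deriv q a m); rewrite -ep (mupMl _ Ta) mup_XsubCX eqxx.
rewrite mupM ?polyXsubC_eq0 ?deriv_neq0 ?(root_size_gt1 p0 pa) // (@mup_XsubCX _ 1) eqxx.
by rewrite mup_p => <-.
Qed.

End MultiplicityCharZero.

Section SquarefreePart.
Variables (K : fieldType) (p : {poly K}).
Hypotheses (charK : [pchar K] =i pred0) (p0 : p != 0).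
(* With f := p, r and Q are the paper's f0 and P. *)
Local Notation d := (mgcd p p^`()).
Local Notation r := (p %/ d).
Local Notation Q := (p^`() %/ d).

Let def_p : r * d = p. Proof. exact/divpK/mgcd_dvdl. Qed.
Let def_p' : Q * d = p^`(). Proof. exact/divpK/mgcd_dvdr. Qed.

Let r_dvdp : r %| p. Proof. exact/divp_dvd/mgcd_dvdl. Qed.

Let r0 : r != 0.
Proof. by apply: contraNneq p0 => r_0; rewrite -def_p r_0 mul0r. Qed.

Let d0 : d != 0.
Proof. by apply: contraNneq p0 => d_0; rewrite -def_p d_0 mulr0. Qed.

Lemma monic_squarefree_part : p \is monic -> r \is monic.
Proof.
have monic_d : d \is monic by rewrite monic_mgcd // gcdp_eq0 negb_and p0.
by move=> monic_p; rewrite -(monicMr _ monic_d) def_p.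
Qed.

Lemma mup_squarefree_part a : root p a -> mup a r = 1%N.
Proof.
move=> pa; have p'0 := deriv_neq0 charK (root_size_gt1 p0 pa).
have m0 : (0 < mup a p)%N by rewrite -XsubC_dvd // dvdp_XsubCl.
have := congr1 (mup a) def_p; rewrite mupM // (eqp_mup _ (eqp_mgcd _ _)) mup_gcdp //.
rewrite (mup_deriv charK p0 pa) (minn_idPr (leq_pred _)) -{2}(prednK m0) -add1n.
exact: addIn.
Qed.

Lemma root_squarefree_part a : root p a -> root r a.
Proof. by move=> pa; rewrite -dvdp_XsubCl XsubC_dvd // mup_squarefree_part. Qed.

Lemma horner_squarefree_deriv a : root p a -> Q.[a] = (mup a p)%:R * r^`().[a].
Proof.
move=> pa; case: (multiplicity_XsubC p a) => m [q]; rewrite p0 /= => qa ep.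
have mup_p : mup a p = m by rewrite ep mupMr // mup_XsubCX eqxx.
case: (multiplicity_XsubC r a) => k [r1]; rewrite r0 /= => r1a er.
have k1 : k = 1%N by rewrite -(mup_squarefree_part pa) er mupMr // mup_XsubCX eqxx.
rewrite {}k1 expr1 in er.
set T := q *+ m + ('X - a%:P) * q^`().
have Qp : Q * p = p^`() * r.
  by transitivity (Q * (r * d)); [rewrite def_p | rewrite mulrCA def_p' mulrC].
have eQ : Q * q = T * r1.
  apply: (@mulfI _ (('X - a%:P) ^+ m.+1)); first by rewrite expf_neq0 // polyXsubC_eq0.
  transitivity (('X - a%:P) * (Q * p)); first by rewrite ep exprSr; ring.
  by rewrite Qp er mulrA ep XsubC_mul_deriv -/T exprSr; ring.
have := congr1 (horner^~ a) eQ; rewrite /= !hornerM /T !hornerE subrr mul0r addr0.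
rewrite er derivM derivXsubC !hornerE subrr hornerMn mulr0 add0r mup_p => e.
by apply: (mulIf qa); rewrite e -mulr_natr; ring.
Qed.

Lemma squarefree_part_prod (rs S : seq K) :
  p = \prod_(z <- rs) ('X - z%:P) -> uniq S ->
  (forall x, (x \in S) = root p x) -> r = \prod_(z <- S) ('X - z%:P).
Proof.
move=> p_split uS S_roots.
have r_monic : r \is monic by rewrite monic_squarefree_part // p_split monic_prod_XsubC.
have /dvdp_prod_XsubC [t] : r %| \prod_(z <- rs) ('X - z%:P) by rewrite -p_split.
rewrite eqp_monic ?monic_prod_XsubC // => /eqP r_prod.
rewrite r_prod; apply/perm_big/allP => x _; apply/eqP.
rewrite -mu_prod_XsubC -r_prod count_uniq_mem // S_roots.
have [px|npx] := boolP (root p x); first exact: mup_squarefree_part.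
by apply: mupNroot; apply: contra npx; rewrite -!dvdp_XsubCl => /dvdp_trans; apply.
Qed.

Lemma horner_mod_squarefree_part (g h : {poly K}) a :
  r^`() * g + r * h = 1 -> root p a -> ((Q * g) %% r).[a] = (mup a p)%:R.
Proof.
move=> Bez pa; have ra := root_squarefree_part pa.
have rg : r^`().[a] * g.[a] = 1.
  by have := congr1 (horner^~ a) Bez; rewrite /= !hornerE (eqP ra) mul0r addr0.
by rewrite horner_mod // hornerM horner_squarefree_deriv // -mulrA rg mulr1.
Qed.

End SquarefreePart.

Section ReducedBezout.
Variables (F : fieldType) (q u : {poly F}).
Hypotheses (q0 : q != 0) (cop_qu : coprimep q u).

Lemma coprimep_Bezout_reduced :
  exists g h : {poly F}, (size g < size q)%N /\ u * g + q * h = 1.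
Proof.
have /Bezout_eq1_coprimepP [[v w] /= Bez] := cop_qu.
exists (w %% q), (v + w %/ q * u); split; first by rewrite ltn_modp.
by rewrite -Bez [in RHS](divp_eq w q); ring.
Qed.

Lemma Bezout_reduced_unique (g h g' h' : {poly F}) :
  (size g < size q)%N -> (size g' < size q)%N ->
  u * g + q * h = 1 -> u * g' + q * h' = 1 -> g' = g /\ h' = h.
Proof.
move=> sg sg' Bez Bez'.
have e : u * (g' - g) = q * (h - h').
  apply/eqP; rewrite -subr_eq0; apply/eqP.
  by transitivity ((u * g' + q * h') - (u * g + q * h)); [ring | rewrite Bez Bez' subrr].
have q_dvd : q %| g' - g by rewrite -(Gauss_dvdpr _ cop_qu) e dvdp_mulIl.
have gg : g' = g.
  apply/eqP; rewrite -subr_eq0; apply: contraLR q_dvd => /dvdp_leq le_q; apply/negP => /le_q.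
  by rewrite leqNgt (leq_ltn_trans (size_polyD _ _)) // size_polyN gtn_max sg sg'.
split=> //; move: e; rewrite gg subrr mulr0 => /esym/eqP.
by rewrite mulf_eq0 (negPf q0) subr_eq0 => /eqP.
Qed.

End ReducedBezout.

Lemma eq_small_poly_in (R : idomainType) (p q : {poly R}) (S : seq R) : uniq S ->
  (size p <= size S)%N -> (size q <= size S)%N ->
  {in S, forall x, p.[x] = q.[x]} -> p = q.
Proof.
move=> uS sp sq pq; apply/eqP; rewrite -subr_eq0; apply/eqP/(roots_geq_poly_eq0 _ uS).
  by apply/allP => x xS; rewrite /root !hornerE pq // subrr.
by rewrite (leq_trans (size_polyD _ _)) // size_polyN geq_max sp sq.
Qed.

Section MapSquarefreePart.
Variables (F K : fieldType) (iota : {rmorphism F -> K}) (f : {poly F}).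
Hypotheses (charF : [pchar F] =i pred0) (f_neq0 : f != 0).
Local Notation f0 := (f %/ mgcd f f^`()).
Local Notation P := (f^`() %/ mgcd f f^`()).
Local Notation fK := (map_poly iota f).

Let charK : [pchar K] =i pred0.
Proof. by move=> n; rewrite (fmorph_pchar iota) charF. Qed.

Let fK_neq0 : fK != 0. Proof. by rewrite map_poly_eq0. Qed.

Let map_f0 : map_poly iota f0 = fK %/ mgcd fK fK^`().
Proof. by rewrite map_divp map_mgcd deriv_map. Qed.

Let map_P : map_poly iota P = fK^`() %/ mgcd fK fK^`().
Proof. by rewrite map_divp map_mgcd deriv_map. Qed.

Lemma map_squarefree_part_prod (rs S : seq K) :
  fK = \prod_(z <- rs) ('X - z%:P) -> uniq S -> (forall x, (x \in S) = root fK x) ->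
  map_poly iota f0 = \prod_(z <- S) ('X - z%:P).
Proof. by rewrite map_f0; exact: squarefree_part_prod. Qed.

Lemma horner_map_mod_squarefree_part (g h : {poly F}) a :
  f0^`() * g + f0 * h = 1 -> root fK a ->
  (map_poly iota ((P * g) %% f0)).[a] = (mup a fK)%:R.
Proof.
move=> Bez; rewrite map_modp rmorphM /= map_f0 map_P.
apply: (horner_mod_squarefree_part charK fK_neq0 (h := map_poly iota h)).
by rewrite -map_f0 deriv_map -!rmorphM -rmorphD Bez rmorph1.
Qed.

End MapSquarefreePart.

Theorem theorem2p1 (F : fieldType) (K : fieldExtType F)
    (f : {poly F}) (Sf : seq K) :
  [pchar F] =i pred0 ->
  f \is monic -> (1 < size f)%N ->
  splittingFieldFor 1%VS (map_poly (in_alg K) f) fullv ->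
  uniq Sf ->
  (forall x : K, (x \in Sf) = root (map_poly (in_alg K) f) x) ->
  let f0 := f %/ mgcd f f^`() in
  let s := (size f0).-1 in
  let P := f^`() %/ mgcd f f^`() in
  exists g h : {poly F},
    [/\ (size g <= s)%N,
        f0^`() * g + f0 * h = 1,
        (forall g' h' : {poly F}, (size g' <= s)%N ->
            f0^`() * g' + f0 * h' = 1 -> g' = g /\ h' = h) &
        (forall Mf : {poly K}, (size Mf <= size Sf)%N ->
            (forall a, a \in Sf -> Mf.[a] = (mup a (map_poly (in_alg K) f))%:R) ->
            coordv s Mf = map_mx (in_alg K) (mxeval (compan f0) P *m coordv s g))].
Proof.
move=> charF monic_f _ [rs f_split _] uS S_roots f0 s P.
have f_neq0 : f != 0 by rewrite monic_neq0.
have fK_split : map_poly (in_alg K) f = \prod_(z <- rs) ('X - z%:P).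
  by apply/eqP; rewrite -eqp_monic ?map_monic ?monic_prod_XsubC.
have f0K_prod := map_squarefree_part_prod charF f_neq0 fK_split uS S_roots.
have size_f0 : size f0 = (size Sf).+1.
  by rewrite -(size_map_poly (in_alg K)) f0K_prod size_prod_XsubC.
have cop : coprimep f0 f0^`().
  rewrite -(coprimep_map (in_alg K)) -deriv_map f0K_prod.
  by have := separable_prod_XsubC Sf; rewrite uS unlock.
have monic_f0 : f0 \is monic by exact: monic_squarefree_part.
have size_s (p : {poly F}) : (size p <= s)%N = (size p < size f0)%N by rewrite /s size_f0.
have [g [h [sg Bez]]] := coprimep_Bezout_reduced (monic_neq0 monic_f0) cop.
have sg_s : (size g <= s)%N by rewrite size_s.
exists g, h; split => //.
  move=> g' h'; rewrite size_s => sg'.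
  exact: (Bezout_reduced_unique (monic_neq0 monic_f0) cop sg sg' Bez).
move=> Mf sMf Mf_val; rewrite mxeval_compan_mul_coordv // map_coordv; congr coordv.
apply: eq_small_poly_in uS sMf _ _ => [|a aS].
  by rewrite size_map_poly -ltnS -size_f0 ltn_modp monic_neq0.
by rewrite Mf_val // (horner_map_mod_squarefree_part charF f_neq0 Bez) -?S_roots.
Qed.
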